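(* Let $A,B\in\mathbb{Z}$ with $4A^3+27B^2\ne0$, let $M$ be a positive integer with $\max\{10\sqrt{|A|},5\sqrt[3]{|B|}\}\le M$, let $D$ be a squarefree positive integer and $E_D: y^2=x^3+D^2Ax+D^3B$. Let $P,Q\in E_D(\mathbb{Q})$ with $MD\le x(P)<x(Q)$ and $y(P)y(Q)>0$. Then \[0.19\,x(P)\le x(P+Q)\le 2\,x(P).\] *)

From mathcomp Require Import all_boot all_order all_algebra.
Set Implicit Arguments. Unset Strict Implicit. Unset Printing Implicit Defensive.
Import Order.TTheory GRing.Theory Num.Theory.
Local Open Scope ring_scope.

Inductive ecpoint := EInf | EAff of rat & rat.

Definition on_curve (a b : rat) (P : ecpoint) : bool :=
  match P with
  | EInf => true
  | EAff x y => y ^+ 2 == x ^+ 3 + a * x + b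
  end.

Definition ecadd (a : rat) (P Q : ecpoint) : ecpoint :=
  match P, Q with
  | EInf, _ => Q
  | _, EInf => P
  | EAff x1 y1, EAff x2 y2 =>
      if x1 == x2 then
        if y1 == - y2 then EInf
        else let l := (3%:R * x1 ^+ 2 + a) / (2%:R * y1) in
             let x3 := l ^+ 2 - 2%:R * x1 in
             EAff x3 (l * (x1 - x3) - y1)
      else let l := (y2 - y1) / (x2 - x1) in
           let x3 := l ^+ 2 - x1 - x2 in
           EAff x3 (l * (x1 - x3) - y1)
  end.

Definition squarefree (n : nat) : bool :=
  [forall p : 'I_n.+1, prime p ==> ~~ (p * p %| n)%N].

From mathcomp Require Import all_boot all_order all_algebra.
From mathcomp Require Import ring lra.
Set Implicit Arguments. Unset Strict Implicit. Unset Printing Implicit Defensive.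
Import Order.TTheory GRing.Theory Num.Theory.
Local Open Scope ring_scope.

(* For P = (x1, y1) and Q = (x2, y2) on y^2 = x^3 + a x + b with x1 != x2,
   x(P + Q) and x(P - Q) are the two roots of the quadratic [chord_quad], and
   y1 y2 > 0 makes x(P + Q) the smaller one.  The quadratic is weighted
   homogeneous in (x, a, b) with weights (1, 2, 3), so we may scale to x1 = 1;
   the hypothesis M D <= x(P) then says |a| <= 1/100 and |b| <= 1/125.  Under
   these bounds the quadratic is nonnegative at 0.19, left of its vertex, and
   nonpositive at 2 unless 2 already lies right of the vertex; in both cases
   the smaller root lies in [0.19, 2]. *)

Section ChordPolynomials.
Variable R : comPzRingType.
Definition chord_num (a b x1 x2 : R) : R := (x1 * x2 + a) * (x1 + x2) + 2 * b.
Definition chord_disc (a b x1 x2 : R) : R := (x1 * x2 - a) ^+ 2 - 4 * b * (x1 + x2).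
Definition chord_quad (a b x1 x2 X : R) : R :=
  (x2 - x1) ^+ 2 * X ^+ 2 - 2 * chord_num a b x1 x2 * X + chord_disc a b x1 x2.

Lemma chord_num_sqrB (a b x1 y1 x2 y2 : R) :
  y1 ^+ 2 = x1 ^+ 3 + a * x1 + b -> y2 ^+ 2 = x2 ^+ 3 + a * x2 + b ->
  chord_num a b x1 x2 ^+ 2 - 4 * (y1 * y2) ^+ 2 = (x2 - x1) ^+ 2 * chord_disc a b x1 x2.
Proof. by move=> e1 e2; rewrite exprMn e1 e2 /chord_num /chord_disc; ring. Qed.
End ChordPolynomials.

Section Chord.
Variable F : fieldType.

Definition chord_x (x1 y1 x2 y2 : F) : F := ((y2 - y1) / (x2 - x1)) ^+ 2 - x1 - x2.

Variables (a b x1 y1 x2 y2 : F).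
Hypotheses (x12 : x1 != x2)
  (on1 : y1 ^+ 2 = x1 ^+ 3 + a * x1 + b) (on2 : y2 ^+ 2 = x2 ^+ 3 + a * x2 + b).

Lemma chord_x_mul :
  chord_x x1 y1 x2 y2 * (x2 - x1) ^+ 2 = chord_num a b x1 x2 - 2 * (y1 * y2).
Proof.
have d0 : x2 - x1 != 0 by rewrite subr_eq0 eq_sym.
have e : (y2 - y1) ^+ 2 = y1 ^+ 2 + y2 ^+ 2 - 2 * (y1 * y2) by ring.
by rewrite /chord_x expr_div_n e on1 on2 /chord_num; field.
Qed.

Lemma chord_x_root : chord_quad a b x1 x2 (chord_x x1 y1 x2 y2) = 0.
Proof.
have d0 : (x2 - x1) ^+ 2 != 0 by rewrite expf_eq0 subr_eq0 eq_sym (negPf x12).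
apply: (mulfI d0); rewrite mulr0.
set x3 := chord_x x1 y1 x2 y2; set d2 := (x2 - x1) ^+ 2.
have -> : d2 * chord_quad a b x1 x2 x3 =
    (x3 * d2) ^+ 2 - 2 * chord_num a b x1 x2 * (x3 * d2) + d2 * chord_disc a b x1 x2.
  by rewrite /d2 /chord_quad; ring.
rewrite chord_x_mul -(chord_num_sqrB on1 on2); ring.
Qed.
End Chord.

Section Normalize.
Variable F : fieldType.
Variables (a b x1 x2 X : F).
Hypothesis x10 : x1 != 0.

Lemma chord_num_normalize :
  chord_num a b x1 x2 = x1 ^+ 3 * chord_num (a / x1 ^+ 2) (b / x1 ^+ 3) 1 (x2 / x1).
Proof. by rewrite /chord_num; field. Qed.

Lemma chord_quad_normalize : chord_quad a b x1 x2 X =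
  x1 ^+ 4 * chord_quad (a / x1 ^+ 2) (b / x1 ^+ 3) 1 (x2 / x1) (X / x1).
Proof. by rewrite /chord_quad /chord_num /chord_disc; field. Qed.

Lemma chord_lead_normalize :
  (x2 - x1) ^+ 2 * X = x1 ^+ 3 * ((x2 / x1 - 1) ^+ 2 * (X / x1)).
Proof. by field. Qed.
End Normalize.

Section QuadraticRoots.
Variable R : realDomainType.
Variables (al be ga r : R).
Hypotheses (al_gt0 : 0 < al) (root_r : al * r ^+ 2 - 2 * be * r + ga = 0).

Lemma quad_factor_root s :
  al * s ^+ 2 - 2 * be * s + ga = (s - r) * ((al * s - be) + (al * r - be)).
Proof. by rewrite -[LHS]subr0 -root_r; ring. Qed.

Lemma quad_root_ge s : al * s <= be -> 0 <= al * s ^+ 2 - 2 * be * s + ga -> s <= r.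
Proof.
move=> s_small; rewrite quad_factor_root; apply: contraLR; rewrite -!ltNge => rs.
rewrite pmulr_rlt0 ?subr_gt0 //.
rewrite -[0]addr0 ler_ltD ?subr_le0 // subr_lt0.
by rewrite (lt_le_trans _ s_small) // ltr_pM2l.
Qed.

Lemma smaller_root_le s : al * r <= be -> al * s ^+ 2 - 2 * be * s + ga <= 0 -> r <= s.
Proof.
move=> r_small; rewrite quad_factor_root; apply: contraLR; rewrite -!ltNge => sr.
rewrite nmulr_rgt0 ?subr_lt0 //.
rewrite -[0]addr0 ltr_leD ?subr_le0 // subr_lt0.
by rewrite (lt_le_trans _ r_small) // ltr_pM2l.
Qed.
End QuadraticRoots.

Section Bounds.
Variable R : realFieldType.

Lemma chord_num_ge (t al be : R) : 1 <= t -> `|al| <= 1/100 -> `|be| <= 1/125 ->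
  (t - 1) ^+ 2 * (19/100) <= chord_num al be 1 t.
Proof.
rewrite /chord_num !ler_norml => t1 /andP[al1 al2] /andP[be1 be2].
have : 0 <= (t - 1) * (3 + al) by apply: mulr_ge0; lra.
nra.
Qed.

Lemma chord_quad_ge (t al be : R) : 1 <= t -> `|al| <= 1/100 -> `|be| <= 1/125 ->
  0 <= chord_quad al be 1 t (19/100).
Proof.
rewrite /chord_quad /chord_num /chord_disc !ler_norml => t1 /andP[al1 al2] /andP[be1 be2].
have : 0 <= (t - 1) * (1 - 2 * (al + 2 * be + 19/100 + 19/100 * al + (19/100) ^+ 2)).
  by apply: mulr_ge0; lra.
nra.
Qed.

Lemma chord_quad_le (t al be : R) : 1 <= t -> `|al| <= 1/100 -> `|be| <= 1/125 ->
  (t - 1) ^+ 2 * 2 < chord_num al be 1 t -> chord_quad al be 1 t 2 <= 0.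
Proof.
rewrite /chord_quad /chord_num /chord_disc !ler_norml => t1 /andP[al1 al2] /andP[be1 be2] hv.
have : 0 <= (7 + 5 * al + 4 * be) * (t - 1) by apply: mulr_ge0; lra.
have : al ^+ 2 <= 1/10000 by nra.
nra.
Qed.

Lemma smaller_chord_root_bounds1 (t al be r : R) :
  1 < t -> `|al| <= 1/100 -> `|be| <= 1/125 ->
  chord_quad al be 1 t r = 0 -> (t - 1) ^+ 2 * r <= chord_num al be 1 t ->
  19/100 <= r <= 2.
Proof.
move=> t1 hal hbe root small.
have lead_gt0 : 0 < (t - 1) ^+ 2 by rewrite exprn_gt0 // subr_gt0.
apply/andP; split.
  apply: (quad_root_ge lead_gt0 root (chord_num_ge (ltW t1) hal hbe)).
  exact: chord_quad_ge (ltW t1) hal hbe.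
have [num_le|num_gt] := lerP (chord_num al be 1 t) ((t - 1) ^+ 2 * 2).
  by rewrite -(ler_pM2l lead_gt0) (le_trans small).
apply: (smaller_root_le lead_gt0 root small).
exact: chord_quad_le (ltW t1) hal hbe num_gt.
Qed.

Lemma smaller_chord_root_bounds (a b x1 x2 x3 : R) :
  0 < x1 -> x1 < x2 -> 100 * `|a| <= x1 ^+ 2 -> 125 * `|b| <= x1 ^+ 3 ->
  chord_quad a b x1 x2 x3 = 0 -> (x2 - x1) ^+ 2 * x3 <= chord_num a b x1 x2 ->
  19/100 * x1 <= x3 <= 2 * x1.
Proof.
move=> x1_gt0 x12 ha hb.
have x10 : x1 != 0 by rewrite gt_eqF.
rewrite chord_quad_normalize // chord_lead_normalize // chord_num_normalize //.
move=> /eqP; rewrite mulf_eq0 expf_eq0 (negPf x10) andbF /= => /eqP root.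
rewrite ler_pM2l ?exprn_gt0 // => small.
have t1 : 1 < x2 / x1 by rewrite ltr_pdivlMr // mul1r.
have hal : `|a / x1 ^+ 2| <= 1/100.
  by rewrite normrM normfV (gtr0_norm (exprn_gt0 2 x1_gt0)) ler_pdivrMr ?exprn_gt0 //; lra.
have hbe : `|b / x1 ^+ 3| <= 1/125.
  by rewrite normrM normfV (gtr0_norm (exprn_gt0 3 x1_gt0)) ler_pdivrMr ?exprn_gt0 //; lra.
have /andP[lo hi] := smaller_chord_root_bounds1 t1 hal hbe root small.
by rewrite -(ler_pdivlMr _ _ x1_gt0) -(ler_pdivrMr _ _ x1_gt0) lo hi.
Qed.
End Bounds.

Lemma scaled_coeff_bound (R : realDomainType) (k z : int) (n M D : nat) (x : R) :
  k%:~R * `|z| <= (M%:R) ^+ n :> int -> (M * D)%:R <= x ->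
  k%:~R * `|D%:R ^+ n * z%:~R| <= x ^+ n.
Proof.
move=> hz hx.
rewrite normrM ger0_norm ?exprn_ge0 // mulrCA -intr_norm -intrM.
apply: le_trans (lerXn2r n _ _ hx); rewrite ?nnegrE ?(le_trans _ hx) //.
rewrite natrM exprMn mulrC ler_wpM2r ?exprn_ge0 //.
by rewrite intz -(ler_int R) rmorphXn /= rmorph_nat in hz.
Qed.

Theorem lemma3p6 (A B : int) (M D : nat) (xP yP xQ yQ : rat) :
  4%:~R * A ^+ 3 + 27%:~R * B ^+ 2 != 0 :> int ->
  (0 < M)%N ->
  (* max(10 sqrt|A|, 5 cbrt|B|) <= M, for M >= 0 *)
  100%:~R * `|A| <= (M%:R) ^+ 2 :> int ->
  125%:~R * `|B| <= (M%:R) ^+ 3 :> int ->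
  (0 < D)%N -> squarefree D ->
  let a : rat := (D%:R) ^+ 2 * A%:~R in
  let b : rat := (D%:R) ^+ 3 * B%:~R in
  on_curve a b (EAff xP yP) -> on_curve a b (EAff xQ yQ) ->
  (M * D)%:R <= xP -> xP < xQ -> 0 < yP * yQ ->
  exists x3 y3 : rat,
    ecadd a (EAff xP yP) (EAff xQ yQ) = EAff x3 y3 /\
    (19%:R / 100%:R) * xP <= x3 /\ x3 <= 2%:R * xP.
Proof.
move=> _ M_gt0 hA hB D_gt0 _ a b /eqP onP /eqP onQ MD_le xPQ yPQ.
rewrite /ecadd (lt_eqF xPQ).
eexists _, _; split; first reflexivity.
have xP_gt0 : 0 < xP by apply: lt_le_trans MD_le; rewrite ltr0n muln_gt0 M_gt0 D_gt0.
have PQ_neq : xP != xQ by rewrite lt_eqF.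
apply/andP; apply: smaller_chord_root_bounds xP_gt0 xPQ _ _ (chord_x_root PQ_neq onP onQ) _.
- exact: scaled_coeff_bound hA MD_le.
- exact: scaled_coeff_bound hB MD_le.
- by rewrite mulrC (chord_x_mul PQ_neq onP onQ) gerBl mulr_ge0 // ltW.
Qed.
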